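(* Let $\beta=1$, $\gamma>2$ and $G\in\mathcal S_{Rob}(\mathbb R^* )$. Then $$\lim_{n\to\infty}\Big\{G_+'(0)\sum_{x=0}^{\infty}G(\tfrac xn)\sum_{r=x+1}^{\infty}r\,p(r)+G_-'(0)\sum_{x=-\infty}^{-1}G(\tfrac xn)\sum_{r=-\infty}^{x}r\,p(r)\Big\}=\frac{\kappa_\gamma}{\hat\alpha}[\nabla_{\beta,\gamma}G(0)]^2,$$ where $\nabla_{\beta,\gamma}G(0)=G_+'(0)$.
   Context: Fix $\gamma>2$ and $\alpha>0$. Let $p(0)=0$, $p(x)=c_\gamma|x|^{-\gamma-1}$ ($x\ne0$), with $c_\gamma$ the constant making $\sum_xp(x)=1$. Let $m=\sum_{x\ge1}xp(x)$, $\sigma^2=\sum_xx^2p(x)$, $\kappa_\gamma=\sigma^2/2$, $\hat\alpha=\alpha m/\kappa_\gamma=2\alpha m/\sigma^2$. $\mathcal S_{Rob}(\mathbb R^* )$ is the space of functions $G=\mathbb 1_{\{u<0\}}G_-+\mathbb 1_{\{u\ge0\}}G_+$ with $G_\pm$ Schwartz functions satisfying $G_-^{(2k+1)}(0)=G_+^{(2k+1)}(0)=\hat\alpha[G_+^{(2k)}(0)-G_-^{(2k)}(0)]$ for all $k\ge0$; $\nabla_{\beta,\gamma}G$ is the piecewise first derivative ($G_-'$ on $(-\infty,0)$, $G_+'$ on $[0,\infty)$). *)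

From Stdlib Require Import Reals ZArith.
From Coquelicot Require Import Coquelicot.
Open Scope R_scope.

Definition pw (gamma : R) (x : Z) : R :=
  if Z.eq_dec x 0 then 0 else Rpower (IZR (Z.abs x)) (- gamma - 1).

(* c_gamma : normalizes sum_{x in Z} p(x) = 1; the sum over Z is split into
   x >= 1 and x <= -1 (p(0) = 0). *)
Definition c_gamma (gamma : R) : R :=
  / (Series (fun k : nat => pw gamma (Z.of_nat k + 1)%Z)
     + Series (fun k : nat => pw gamma (- (Z.of_nat k + 1))%Z)).

Definition p (gamma : R) (x : Z) : R := c_gamma gamma * pw gamma x.

Definition m_mean (gamma : R) : R :=
  Series (fun k : nat => IZR (Z.of_nat k + 1) * p gamma (Z.of_nat k + 1)%Z).

Definition sigma2 (gamma : R) : R :=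
  Series (fun k : nat => (IZR (Z.of_nat k + 1))^2 * p gamma (Z.of_nat k + 1)%Z)
  + Series (fun k : nat => (IZR (- (Z.of_nat k + 1)))^2 * p gamma (- (Z.of_nat k + 1))%Z).

Definition kappa (gamma : R) : R := sigma2 gamma / 2.

Definition alpha_hat (alpha gamma : R) : R := alpha * m_mean gamma / kappa gamma.

Definition schwartz (f : R -> R) : Prop :=
  (forall (k : nat) (x : R), ex_derive_n f k x) /\
  (forall (k j : nat), exists C : R, forall x : R,
      Rabs (x ^ j * Derive_n f k x) <= C).

Definition glue (Gm Gp : R -> R) (u : R) : R :=
  if Rlt_dec u 0 then Gm u else Gp u.

(* G in S_Rob(R^star), given by its pieces G_-, G_+ *)
Definition S_Rob (ahat : R) (Gm Gp : R -> R) : Prop :=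
  schwartz Gm /\ schwartz Gp /\
  forall k : nat,
    Derive_n Gm (2 * k + 1) 0 = ahat * (Derive_n Gp (2 * k) 0 - Derive_n Gm (2 * k) 0) /\
    Derive_n Gp (2 * k + 1) 0 = ahat * (Derive_n Gp (2 * k) 0 - Derive_n Gm (2 * k) 0).

From Stdlib Require Import Reals ZArith Lra Lia.
From Coquelicot Require Import Coquelicot.
Open Scope R_scope.

(* The inner sums are the tails T_k = sum_{r > k} r p(r) of the first moment (with a minus
   sign on the left), so the expression is
     G_+'(0) sum_k G(k/n) T_k - G_-'(0) sum_k G(-(k+1)/n) T_k.
   Summing by parts, sum_k T_k = sum_{r >= 1} r^2 p(r) = kappa, which is finite because
   gamma > 2. Since G is bounded and G(k/n) -> G_+(0), G(-(k+1)/n) -> G_-(0), dominated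
   convergence for series gives the limit kappa (G_+'(0) G_+(0) - G_-'(0) G_-(0)); the Robin
   condition at order 0, G_-'(0) = G_+'(0) = alpha_hat (G_+(0) - G_-(0)), turns it into
   kappa / alpha_hat * G_+'(0)^2. *)

Lemma Series_nonneg (a : nat -> R) :
  (forall k, 0 <= a k) -> ex_series a -> 0 <= Series a.
Proof.
  intros Ha Hex.
  replace 0 with (Series (fun _ => 0 * 0)) by (rewrite Series_scal_l; ring).
  apply Series_le; [intros k; rewrite Rmult_0_l; split; [lra | apply Ha] | exact Hex].
Qed.

Lemma Series_pos (a : nat -> R) :
  (forall k, 0 <= a k) -> 0 < a 0%nat -> ex_series a -> 0 < Series a.
Proof.
  intros Ha H0 Hex. rewrite Series_incr_1 by exact Hex.
  assert (0 <= Series (fun k => a (S k))).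
  { apply Series_nonneg; [intros; apply Ha | now apply (ex_series_incr_1 a)]. }
  lra.
Qed.

Lemma ex_series_bounded_sum_n (a : nat -> R) (M : R) :
  (forall k, 0 <= a k) -> (forall N, sum_n a N <= M) -> ex_series a.
Proof.
  intros Ha HM.
  destruct (ex_finite_lim_seq_incr (sum_n a) M) as [l Hl]; [| exact HM | now exists l].
  intros N. rewrite sum_Sn. specialize (Ha (S N)). unfold plus; simpl. lra.
Qed.

Lemma Rpower_neg_succ_le (s x : R) : 1 < s -> 0 < x ->
  Rpower (x + 1) (- s) <= (Rpower x (1 - s) - Rpower (x + 1) (1 - s)) / (s - 1).
Proof.
  intros Hs Hx.
  destruct (MVT_gen (fun y => Rpower y (1 - s)) x (x + 1)
              (fun y => (1 - s) * Rpower y (- s))) as [c [Hc Heq]].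
  - intros y Hy. rewrite Rmin_left, Rmax_right in Hy by lra.
    apply is_derive_Reals. replace (- s) with (1 - s - 1) by ring.
    apply derivable_pt_lim_power. lra.
  - intros y Hy. rewrite Rmin_left, Rmax_right in Hy by lra.
    apply derivable_continuous_pt. exists ((1 - s) * Rpower y (1 - s - 1)).
    apply derivable_pt_lim_power. lra.
  - rewrite Rmin_left, Rmax_right in Hc by lra.
    assert (Hmono : Rpower (x + 1) (- s) <= Rpower c (- s)).
    { rewrite !Rpower_Ropp. apply Rinv_le_contravar; [apply exp_pos |].
      apply Rle_Rpower_l; lra. }
    apply Rmult_le_reg_r with (s - 1); [lra |].
    unfold Rdiv. rewrite Rmult_assoc, Rinv_l, Rmult_1_r by lra.
    replace (x + 1 - x) with 1 in Heq by ring. nra.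
Qed.

Lemma ex_series_Rpower_neg (s : R) : 1 < s ->
  ex_series (fun k => Rpower (INR k + 1) (- s)).
Proof.
  intros Hs. apply ex_series_incr_1.
  set (u k := Rpower (INR k + 1) (1 - s)).
  assert (Hterm : forall k, Rpower (INR (S k) + 1) (- s) <= (u k - u (S k)) / (s - 1)).
  { intros k. unfold u. rewrite S_INR.
    apply Rpower_neg_succ_le; [lra | generalize (pos_INR k); lra]. }
  assert (Htelescope : forall N, sum_n (fun k => Rpower (INR (S k) + 1) (- s)) N
                                 <= (u 0%nat - u (S N)) / (s - 1)).
  { induction N as [| N IH].
    - rewrite sum_O. apply Hterm.
    - rewrite sum_Sn. unfold plus; cbn -[INR Rpower sum_n].
      specialize (Hterm (S N)).
      replace ((u 0%nat - u (S (S N))) / (s - 1))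
        with ((u 0%nat - u (S N)) / (s - 1) + (u (S N) - u (S (S N))) / (s - 1))
        by (field; lra).
      lra. }
  apply ex_series_bounded_sum_n with (u 0%nat / (s - 1)).
  - intros k. left. apply exp_pos.
  - intros N. eapply Rle_trans; [apply Htelescope |].
    assert (0 < u (S N)) by apply exp_pos.
    apply Rmult_le_compat_r; [left; apply Rinv_0_lt_compat |]; lra.
Qed.

Lemma is_lim_seq_Series_tail (a : nat -> R) :
  ex_series a -> is_lim_seq (fun N => Series (fun k => a (S N + k)%nat)) 0.
Proof.
  intros Hex.
  apply is_lim_seq_ext with (fun N => Series a - sum_n a N).
  { intros N. rewrite (Series_incr_n a (S N)), sum_n_Reals by (lia || exact Hex). simpl. ring. }
  replace (Finite 0) with (Rbar_minus (Series a) (Series a)) by (simpl; f_equal; ring).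
  apply is_lim_seq_minus'; [apply is_lim_seq_const | apply Series_correct, Hex].
Qed.

Lemma is_lim_seq_sum_n_null (u : nat -> nat -> R) (N : nat) :
  (forall k, is_lim_seq (fun n => u n k) 0) -> is_lim_seq (fun n => sum_n (u n) N) 0.
Proof.
  intros Hu. induction N as [| N IH].
  - apply is_lim_seq_ext with (fun n => u n 0%nat); [intros n; now rewrite sum_O | apply Hu].
  - apply is_lim_seq_ext with (fun n => sum_n (u n) N + u n (S N)).
    { intros n. now rewrite sum_Sn. }
    replace (Finite 0) with (Rbar_plus 0 0) by (simpl; f_equal; ring).
    apply is_lim_seq_plus'; [exact IH | apply Hu].
Qed.

Lemma is_lim_seq_Series_dominated_null (h : nat -> nat -> R) (a : nat -> R) (D : R) :
  (forall k, 0 <= a k) -> ex_series a -> (forall n k, Rabs (h n k) <= D) ->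
  (forall k, is_lim_seq (fun n => h n k) 0) ->
  is_lim_seq (fun n => Series (fun k => h n k * a k)) 0.
Proof.
  intros Ha Hex Hh Hlim.
  set (tail N := Series (fun k => a (S N + k)%nat)).
  assert (Hex_abs : forall n, ex_series (fun k => Rabs (h n k * a k))).
  { intros n. apply (@ex_series_le R_AbsRing R_CompleteNormedModule _ (fun k => D * a k)).
    - intros k. unfold norm; simpl; unfold abs; simpl.
      rewrite Rabs_Rabsolu, Rabs_mult, (Rabs_pos_eq (a k)) by apply Ha.
      apply Rmult_le_compat_r; [apply Ha | apply Hh].
    - now apply (ex_series_scal_l D a). }
  assert (Hsplit : forall n N, Rabs (Series (fun k => h n k * a k))
                    <= sum_n (fun k => Rabs (h n k) * a k) N + D * tail N).
  { intros n N. eapply Rle_trans; [apply Series_Rabs, Hex_abs |].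
    rewrite (Series_incr_n _ (S N)), <- sum_n_Reals by (lia || apply Hex_abs). simpl.
    apply Rplus_le_compat.
    - right. apply sum_n_ext. intros k. rewrite Rabs_mult, (Rabs_pos_eq (a k)) by apply Ha. reflexivity.
    - unfold tail. rewrite <- Series_scal_l. apply Series_le.
      + intros k. split; [apply Rabs_pos |].
        rewrite Rabs_mult, (Rabs_pos_eq (a _)) by apply Ha.
        apply Rmult_le_compat_r; [apply Ha | apply Hh].
      + apply (ex_series_scal_l D (fun k => a (S N + k)%nat)). now apply (ex_series_incr_n a (S N)). }
  apply is_lim_seq_spec. intros eps.
  assert (Htail : is_lim_seq (fun N => D * tail N) 0).
  { replace (Finite 0) with (Rbar_mult D 0) by (simpl; f_equal; ring).
    apply is_lim_seq_scal_l, is_lim_seq_Series_tail, Hex. }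
  assert (Heps2 : 0 < eps / 2) by (generalize (cond_pos eps); lra).
  destruct (proj2 (is_lim_seq_spec _ _) Htail (mkposreal _ Heps2)) as [N HN].
  specialize (HN N (le_n N)). simpl in HN. rewrite Rminus_0_r in HN.
  assert (Hhead : is_lim_seq (fun n => sum_n (fun k => Rabs (h n k) * a k) N) 0).
  { apply is_lim_seq_sum_n_null. intros k.
    replace (Finite 0) with (Rbar_mult 0 (a k)) by (simpl; f_equal; ring).
    apply is_lim_seq_scal_r, (proj1 (is_lim_seq_abs_0 _)), Hlim. }
  eapply filter_imp; [| exact (proj2 (is_lim_seq_spec _ _) Hhead (mkposreal _ Heps2))].
  intros n Hn. simpl in Hn. rewrite Rminus_0_r in *.
  specialize (Hsplit n N).
  generalize (Rle_abs (D * tail N)) (Rle_abs (sum_n (fun k => Rabs (h n k) * a k) N)). lra.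
Qed.

Lemma is_lim_seq_Series_dominated (g : nat -> nat -> R) (a : nat -> R) (C L : R) :
  (forall k, 0 <= a k) -> ex_series a -> (forall n k, Rabs (g n k) <= C) ->
  (forall k, is_lim_seq (fun n => g n k) L) ->
  is_lim_seq (fun n => Series (fun k => g n k * a k)) (L * Series a).
Proof.
  intros Ha Hex Hg Hlim.
  assert (Hsplit : forall n, Series (fun k => g n k * a k)
                             = Series (fun k => (g n k - L) * a k) + L * Series a).
  { intros n. rewrite <- Series_scal_l, <- Series_plus.
    - apply Series_ext. intros k. ring.
    - apply ex_series_Rabs.
      apply (@ex_series_le R_AbsRing R_CompleteNormedModule _ (fun k => (C + Rabs L) * a k)).
      + intros k. unfold norm; simpl; unfold abs; simpl.
        rewrite Rabs_Rabsolu, Rabs_mult, (Rabs_pos_eq (a k)) by apply Ha.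
        apply Rmult_le_compat_r; [apply Ha |].
        unfold Rminus. eapply Rle_trans; [apply Rabs_triang |].
        rewrite Rabs_Ropp. apply Rplus_le_compat_r, Hg.
      + now apply (ex_series_scal_l (C + Rabs L) a).
    - now apply (ex_series_scal_l L a). }
  apply is_lim_seq_ext with (fun n => Series (fun k => (g n k - L) * a k) + L * Series a).
  { intros n. now rewrite Hsplit. }
  replace (Finite (L * Series a)) with (Rbar_plus 0 (L * Series a)) by (simpl; f_equal; ring).
  apply is_lim_seq_plus'; [| apply is_lim_seq_const].
  apply is_lim_seq_Series_dominated_null with (C + Rabs L); [exact Ha | exact Hex | |].
  - intros n k. unfold Rminus. eapply Rle_trans; [apply Rabs_triang |].
    rewrite Rabs_Ropp. apply Rplus_le_compat_r, Hg.
  - intros k. replace (Finite 0) with (Rbar_minus L L) by (simpl; f_equal; ring).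
    apply is_lim_seq_minus'; [apply Hlim | apply is_lim_seq_const].
Qed.

Lemma is_series_Series_tails (b : nat -> R) :
  (forall k, 0 <= b k) -> ex_series (fun k => (INR k + 1) * b k) ->
  is_series (fun k => Series (fun j => b (k + j)%nat)) (Series (fun k => (INR k + 1) * b k)).
Proof.
  intros Hb Hex1.
  set (T k := Series (fun j => b (k + j)%nat)).
  set (B k := (INR k + 1) * b k).
  assert (HexB : ex_series b).
  { apply (@ex_series_le R_AbsRing R_CompleteNormedModule _ B); [| exact Hex1].
    intros k. unfold norm; simpl; unfold abs; simpl. unfold B.
    rewrite Rabs_pos_eq by apply Hb. generalize (Hb k) (pos_INR k). nra. }
  assert (Hex_shift : forall k, ex_series (fun j => b (k + j)%nat)).
  { intros k. now apply (ex_series_incr_n b k). }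
  assert (HT_nonneg : forall k, 0 <= T k).
  { intros k. apply Series_nonneg; [intros j; apply Hb | apply Hex_shift]. }
  assert (HT_succ : forall k, T k = b k + T (S k)).
  { intros k. unfold T. rewrite Series_incr_1 by apply Hex_shift.
    rewrite Nat.add_0_r. f_equal. apply Series_ext. intros j. f_equal. lia. }
  assert (Hsum : forall N, sum_n T N = sum_n B N + (INR N + 1) * T (S N)).
  { induction N as [| N IH].
    - rewrite !sum_O, HT_succ. unfold B. simpl. ring.
    - rewrite !sum_Sn, IH, (HT_succ (S N)). unfold B. rewrite S_INR. unfold plus; simpl. ring. }
  assert (Hlast : forall N, (INR N + 1) * T (S N) <= Series (fun j => B (S N + j)%nat)).
  { intros N. unfold T. rewrite <- Series_scal_l. apply Series_le.
    - intros j. generalize (Hb (S N + j)%nat) (pos_INR N). split; [nra |].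
      unfold B. rewrite plus_INR, S_INR. generalize (pos_INR j). nra.
    - now apply (ex_series_incr_n B (S N)). }
  change (is_lim_seq (sum_n T) (Series B)).
  apply is_lim_seq_le_le with (sum_n B) (fun _ => Series B).
  - intros N. rewrite Hsum. split.
    + generalize (HT_nonneg (S N)) (pos_INR N). nra.
    + rewrite (Series_incr_n B (S N)), <- sum_n_Reals by (lia || exact Hex1).
      apply Rplus_le_compat_l, Hlast.
  - apply Series_correct, Hex1.
  - apply is_lim_seq_const.
Qed.

Lemma is_lim_seq_div_INR (x : R) : is_lim_seq (fun n => x / INR n) 0.
Proof.
  replace (Finite 0) with (Rbar_mult x (Rbar_inv p_infty)) by (simpl; f_equal; ring).
  apply is_lim_seq_scal_l, is_lim_seq_inv; [apply is_lim_seq_INR | discriminate].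
Qed.

Lemma schwartz_bounded (f : R -> R) : schwartz f -> exists C, forall x, Rabs (f x) <= C.
Proof.
  intros [_ Hdecay]. destruct (Hdecay 0%nat 0%nat) as [C HC].
  exists C. intros x. specialize (HC x). simpl in HC. now rewrite Rmult_1_l in HC.
Qed.

Lemma schwartz_continuous (f : R -> R) (x : R) : schwartz f -> continuity_pt f x.
Proof.
  intros [Hder _]. apply continuity_pt_filterlim.
  apply (@ex_derive_continuous R_AbsRing R_NormedModule), (Hder 1%nat x).
Qed.

Lemma glue_nonneg (Gm Gp : R -> R) (u : R) : 0 <= u -> glue Gm Gp u = Gp u.
Proof. intros Hu. unfold glue. destruct (Rlt_dec u 0); [lra | reflexivity]. Qed.

Lemma glue_neg (Gm Gp : R -> R) (u : R) : u < 0 -> glue Gm Gp u = Gm u.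
Proof. intros Hu. unfold glue. destruct (Rlt_dec u 0); [reflexivity | lra]. Qed.

Lemma glue_bounded (Gm Gp : R -> R) (Cm Cp : R) :
  (forall x, Rabs (Gm x) <= Cm) -> (forall x, Rabs (Gp x) <= Cp) ->
  forall u, Rabs (glue Gm Gp u) <= Rmax Cm Cp.
Proof.
  intros HCm HCp u. unfold glue. destruct (Rlt_dec u 0).
  - eapply Rle_trans; [apply HCm | apply Rmax_l].
  - eapply Rle_trans; [apply HCp | apply Rmax_r].
Qed.

Lemma is_lim_seq_glue_div_INR_nonneg (Gm Gp : R -> R) (x : R) :
  0 <= x -> continuity_pt Gp 0 -> is_lim_seq (fun n => glue Gm Gp (x / INR n)) (Gp 0).
Proof.
  intros Hx HGp.
  apply is_lim_seq_ext with (fun n => Gp (x / INR n)).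
  { intros n. symmetry. apply glue_nonneg.
    destruct (Req_dec (INR n) 0) as [-> | Hn].
    - unfold Rdiv. rewrite Rinv_0. lra.
    - apply Rdiv_le_0_compat; [exact Hx | generalize (pos_INR n); lra]. }
  apply is_lim_seq_continuous; [exact HGp | apply is_lim_seq_div_INR].
Qed.

Lemma is_lim_seq_glue_div_INR_neg (Gm Gp : R -> R) (x : R) :
  x < 0 -> continuity_pt Gm 0 -> is_lim_seq (fun n => glue Gm Gp (x / INR n)) (Gm 0).
Proof.
  intros Hx HGm.
  (* For n = 0, x / 0 = 0 lands on the G_+ side. *)
  apply is_lim_seq_ext_loc with (fun n => Gm (x / INR n)).
  { exists 1%nat. intros n Hn. symmetry. apply glue_neg.
    apply Rdiv_neg_pos; [exact Hx | apply lt_0_INR; lia]. }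
  apply is_lim_seq_continuous; [exact HGm | apply is_lim_seq_div_INR].
Qed.

Lemma is_lim_seq_Series_glue (Gm Gp : R -> R) (x a : nat -> R) (l : R) :
  schwartz Gm -> schwartz Gp -> (forall k, 0 <= a k) -> ex_series a ->
  (forall k, is_lim_seq (fun n => glue Gm Gp (x k / INR n)) l) ->
  is_lim_seq (fun n => Series (fun k => glue Gm Gp (x k / INR n) * a k)) (l * Series a).
Proof.
  intros HSm HSp Ha Hex Hlim.
  destruct (schwartz_bounded _ HSm) as [Cm HCm], (schwartz_bounded _ HSp) as [Cp HCp].
  apply is_lim_seq_Series_dominated with (Rmax Cm Cp); [exact Ha | exact Hex | | exact Hlim].
  intros n k. now apply glue_bounded.
Qed.

Lemma S_Rob_Derive_0 (ahat : R) (Gm Gp : R -> R) : S_Rob ahat Gm Gp ->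
  Derive Gm 0 = ahat * (Gp 0 - Gm 0) /\ Derive Gp 0 = ahat * (Gp 0 - Gm 0).
Proof. intros [_ [_ Hrob]]. exact (Hrob 0%nat). Qed.

Lemma IZR_of_nat_succ (k : nat) : IZR (Z.of_nat k + 1) = INR k + 1.
Proof. now rewrite plus_IZR, <- INR_IZR_INZ. Qed.

Lemma pw_opp (gamma : R) (z : Z) : pw gamma (- z) = pw gamma z.
Proof.
  unfold pw. rewrite Z.abs_opp.
  destruct (Z.eq_dec (- z) 0), (Z.eq_dec z 0); reflexivity || lia.
Qed.

Lemma p_opp (gamma : R) (z : Z) : p gamma (- z) = p gamma z.
Proof. unfold p. now rewrite pw_opp. Qed.

Lemma pw_of_nat_succ (gamma : R) (k : nat) :
  pw gamma (Z.of_nat k + 1) = Rpower (INR k + 1) (- gamma - 1).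
Proof.
  unfold pw. destruct (Z.eq_dec (Z.of_nat k + 1) 0); [lia |].
  now rewrite Z.abs_eq, IZR_of_nat_succ by lia.
Qed.

Lemma c_gamma_pos (gamma : R) : 0 < gamma -> 0 < c_gamma gamma.
Proof.
  intros Hg. unfold c_gamma.
  rewrite (Series_ext (fun k => pw gamma (- (Z.of_nat k + 1))) (fun k => pw gamma (Z.of_nat k + 1)))
    by (intros k; apply pw_opp).
  rewrite (Series_ext _ _ (pw_of_nat_succ gamma)).
  enough (0 < Series (fun k => Rpower (INR k + 1) (- gamma - 1))) by (apply Rinv_0_lt_compat; lra).
  apply Series_pos; [intros k; left; apply exp_pos | apply exp_pos |].
  replace (- gamma - 1) with (- (gamma + 1)) by ring. apply ex_series_Rpower_neg. lra.
Qed.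

Definition moment1 (gamma : R) (k : nat) : R :=
  IZR (Z.of_nat k + 1) * p gamma (Z.of_nat k + 1).

Definition jump_tail (gamma : R) (k : nat) : R := Series (fun j => moment1 gamma (k + j)).

Lemma moment1_Rpower (gamma : R) (k : nat) :
  moment1 gamma k = c_gamma gamma * Rpower (INR k + 1) (- gamma).
Proof.
  unfold moment1, p. rewrite pw_of_nat_succ, IZR_of_nat_succ.
  assert (Hk : 0 < INR k + 1) by (generalize (pos_INR k); lra).
  replace (- gamma) with (1 + (- gamma - 1)) at 2 by ring.
  rewrite Rpower_plus, Rpower_1 by exact Hk. ring.
Qed.

Lemma moment2_Rpower (gamma : R) (k : nat) :
  (INR k + 1) * moment1 gamma k = c_gamma gamma * Rpower (INR k + 1) (- (gamma - 1)).
Proof.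
  rewrite moment1_Rpower.
  assert (Hk : 0 < INR k + 1) by (generalize (pos_INR k); lra).
  replace (- (gamma - 1)) with (1 + - gamma) by ring.
  rewrite Rpower_plus, Rpower_1 by exact Hk. ring.
Qed.

Lemma moment1_pos (gamma : R) (k : nat) : 0 < gamma -> 0 < moment1 gamma k.
Proof.
  intros Hg. rewrite moment1_Rpower.
  apply Rmult_lt_0_compat; [now apply c_gamma_pos | apply exp_pos].
Qed.

Lemma ex_series_moment1 (gamma : R) : 1 < gamma -> ex_series (moment1 gamma).
Proof.
  intros Hg. apply (ex_series_ext _ _ (fun k => eq_sym (moment1_Rpower gamma k))).
  apply (ex_series_scal_l (c_gamma gamma) (fun k => Rpower (INR k + 1) (- gamma))).
  now apply ex_series_Rpower_neg.
Qed.

Lemma ex_series_moment2 (gamma : R) : 2 < gamma ->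
  ex_series (fun k => (INR k + 1) * moment1 gamma k).
Proof.
  intros Hg. apply (ex_series_ext _ _ (fun k => eq_sym (moment2_Rpower gamma k))).
  apply (ex_series_scal_l (c_gamma gamma) (fun k => Rpower (INR k + 1) (- (gamma - 1)))).
  apply ex_series_Rpower_neg. lra.
Qed.

Lemma m_mean_pos (gamma : R) : 1 < gamma -> 0 < m_mean gamma.
Proof.
  intros Hg. change (0 < Series (moment1 gamma)).
  apply Series_pos; [intros k; left; apply moment1_pos; lra | apply moment1_pos; lra |].
  now apply ex_series_moment1.
Qed.

Lemma jump_tail_nonneg (gamma : R) (k : nat) : 1 < gamma -> 0 <= jump_tail gamma k.
Proof.
  intros Hg. apply Series_nonneg; [intros j; left; apply moment1_pos; lra |].
  now apply (ex_series_incr_n (moment1 gamma) k), ex_series_moment1.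
Qed.

Lemma kappa_moment2 (gamma : R) :
  kappa gamma = Series (fun k => (INR k + 1) * moment1 gamma k).
Proof.
  assert (Hsq : forall k, IZR (Z.of_nat k + 1) ^ 2 * p gamma (Z.of_nat k + 1)%Z
                          = (INR k + 1) * moment1 gamma k).
  { intros k. unfold moment1. rewrite IZR_of_nat_succ. ring. }
  unfold kappa, sigma2.
  rewrite (Series_ext _ _ Hsq).
  rewrite (Series_ext (fun k => IZR (- (Z.of_nat k + 1)) ^ 2 * p gamma (- (Z.of_nat k + 1))%Z)
             (fun k => (INR k + 1) * moment1 gamma k))
    by (intros k; rewrite opp_IZR, p_opp, <- Hsq; ring).
  field.
Qed.

Lemma is_series_jump_tail (gamma : R) : 2 < gamma -> is_series (jump_tail gamma) (kappa gamma).
Proof.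
  intros Hg. rewrite kappa_moment2.
  apply is_series_Series_tails; [intros k; left; apply moment1_pos; lra |].
  now apply ex_series_moment2.
Qed.

Lemma alpha_hat_pos (alpha gamma : R) : 0 < alpha -> 2 < gamma -> 0 < alpha_hat alpha gamma.
Proof.
  intros Ha Hg. unfold alpha_hat.
  assert (Hkappa : 0 < kappa gamma).
  { assert (Hpos : forall k, 0 < (INR k + 1) * moment1 gamma k).
    { intros k. apply Rmult_lt_0_compat; [generalize (pos_INR k); lra | apply moment1_pos; lra]. }
    rewrite kappa_moment2.
    apply Series_pos; [intros k; left; apply Hpos | apply Hpos | now apply ex_series_moment2]. }
  apply Rdiv_lt_0_compat; [apply Rmult_lt_0_compat; [exact Ha | apply m_mean_pos; lra] | exact Hkappa].
Qed.

Lemma Series_right_moments (gamma : R) (k : nat) :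
  Series (fun j => IZR (Z.of_nat k + 1 + Z.of_nat j) * p gamma (Z.of_nat k + 1 + Z.of_nat j)%Z)
  = jump_tail gamma k.
Proof.
  apply Series_ext. intros j. unfold moment1.
  now replace (Z.of_nat k + 1 + Z.of_nat j)%Z with (Z.of_nat (k + j) + 1)%Z by lia.
Qed.

Lemma Series_left_moments (gamma : R) (k : nat) :
  Series (fun j => IZR (- (Z.of_nat k + 1) - Z.of_nat j)
                   * p gamma (- (Z.of_nat k + 1) - Z.of_nat j)%Z)
  = - jump_tail gamma k.
Proof.
  unfold jump_tail. rewrite <- Series_opp. apply Series_ext. intros j. unfold moment1.
  replace (- (Z.of_nat k + 1) - Z.of_nat j)%Z with (- (Z.of_nat (k + j) + 1))%Z by lia.
  rewrite opp_IZR, p_opp. ring.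
Qed.

Theorem lemmaA4 (alpha gamma : R) (Gm Gp : R -> R) :
  2 < gamma -> 0 < alpha ->
  S_Rob (alpha_hat alpha gamma) Gm Gp ->
  is_lim_seq
    (fun n : nat =>
       Derive Gp 0 *
         Series (fun k : nat =>
           glue Gm Gp (INR k / INR n) *
           Series (fun j : nat =>
             IZR (Z.of_nat k + 1 + Z.of_nat j) * p gamma (Z.of_nat k + 1 + Z.of_nat j)%Z))
       + Derive Gm 0 *
         Series (fun k : nat =>
           glue Gm Gp (IZR (- (Z.of_nat k + 1)) / INR n) *
           Series (fun j : nat =>
             IZR (- (Z.of_nat k + 1) - Z.of_nat j)
               * p gamma (- (Z.of_nat k + 1) - Z.of_nat j)%Z)))
    (kappa gamma / alpha_hat alpha gamma * (Derive Gp 0) ^ 2).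
Proof.
  intros Hg Halpha HG.
  destruct (S_Rob_Derive_0 _ _ _ HG) as [HDm HDp].
  destruct HG as [HSm [HSp _]].
  assert (HK := is_series_jump_tail gamma Hg).
  assert (HT : forall k, 0 <= jump_tail gamma k) by (intros k; apply jump_tail_nonneg; lra).
  assert (HexT : ex_series (jump_tail gamma)) by (now exists (kappa gamma)).
  apply is_lim_seq_ext with (fun n =>
     Derive Gp 0 * Series (fun k => glue Gm Gp (INR k / INR n) * jump_tail gamma k)
     + - Derive Gm 0
         * Series (fun k => glue Gm Gp (IZR (- (Z.of_nat k + 1)) / INR n) * jump_tail gamma k)).
  { intros n. rewrite <- Ropp_mult_distr_l, Ropp_mult_distr_r, <- Series_opp.
    f_equal; f_equal; apply Series_ext; intros k.
    - now rewrite Series_right_moments.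
    - rewrite Series_left_moments. ring. }
  replace (kappa gamma / alpha_hat alpha gamma * Derive Gp 0 ^ 2)
    with (Derive Gp 0 * (Gp 0 * Series (jump_tail gamma))
          + - Derive Gm 0 * (Gm 0 * Series (jump_tail gamma))).
  2: { rewrite (is_series_unique _ _ HK), HDm, HDp. field.
       apply Rgt_not_eq, alpha_hat_pos; assumption. }
  apply is_lim_seq_plus'; apply is_lim_seq_mult'; try apply is_lim_seq_const;
    apply is_lim_seq_Series_glue; try assumption; intros k.
  - apply is_lim_seq_glue_div_INR_nonneg; [apply pos_INR | now apply schwartz_continuous].
  - apply is_lim_seq_glue_div_INR_neg; [| now apply schwartz_continuous].
    rewrite opp_IZR, IZR_of_nat_succ. generalize (pos_INR k). lra.
Qed.
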